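(* There exists a function $f:\mathbb{N}\to\mathbb{N}$ such that for every field $\mathbb{F}$ and every matrix $A$ over $\mathbb{F}$ (with at least one column), $\mathrm{dsd}(M(A))\le\mathrm{dd}(M(A))\le f(\mathrm{dsd}(M(A)))$.
   Context: $M(A)$ is the column matroid of $A$. A matroid is connected if any two elements lie in a common circuit; components are maximal connected restrictions. Deletion-depth: $\mathrm{dd}(M)=1$ if $M$ has a single element; if $M$ is disconnected, $\mathrm{dd}(M)$ is the maximum over components; if $M$ is connected, $\mathrm{dd}(M)=1+\min_{e}\mathrm{dd}(M\setminus e)$. Deletion$^*$-depth of a matrix $B$ with $n$ columns: $\mathrm{dsd}(M(B))=0$ if the rank of $M(B)$ equals its number of elements; otherwise if $M(B)$ is disconnected, $\mathrm{dsd}(M(B))$ is the maximum of $\mathrm{dsd}(M(B_C))$ over components $C$ ($B_C$ the submatrix of columns in $C$); otherwise $\mathrm{dsd}(M(B))=1+\min_{v\in\mathbb{F}^n}\mathrm{dsd}(M(B\oplus v^\top))$, where $B\oplus v^\top$ is $B$ with row $v^\top$ appended. *)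

From HB Require Import structures.
From mathcomp Require Import all_boot all_order all_algebra.
From Stdlib Require Import ClassicalEpsilon.
Set Implicit Arguments. Unset Strict Implicit. Unset Printing Implicit Defensive.
Import GRing.Theory.
Local Open Scope ring_scope.

Section ColumnMatroid.
Variables (F : fieldType) (n : nat).

(* The matroid M(B) has ground set 'I_n (columns of B). A subset S of
   columns is treated as the restriction M(B)|S, i.e. the column matroid
   of the submatrix B_S. *)

(* B with the columns outside X replaced by zero; its rank is the rank of
   the set X of columns of B. *)
Definition colres m (B : 'M[F]_(m, n)) (X : {set 'I_n}) : 'M[F]_(m, n) :=
  \matrix_(i, j) if j \in X then B i j else 0.

Definition indep m (B : 'M[F]_(m, n)) (X : {set 'I_n}) : bool :=
  \rank (colres B X) == #|X|.

Definition circuit m (B : 'M[F]_(m, n)) (S C : {set 'I_n}) : bool :=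
  [&& C \subset S, ~~ indep B C &
      [forall D : {set 'I_n}, (D \proper C) ==> indep B D]].

Definition connected m (B : 'M[F]_(m, n)) (S : {set 'I_n}) : bool :=
  [forall e in S, forall f in S, (e != f) ==>
     [exists C : {set 'I_n}, [&& circuit B S C, e \in C & f \in C]]].

Definition component m (B : 'M[F]_(m, n)) (S C : {set 'I_n}) : bool :=
  [&& C \subset S, C != set0, connected B C &
      [forall D : {set 'I_n}, ((C \proper D) && (D \subset S)) ==> ~~ connected B D]].

Inductive dd_le m (B : 'M[F]_(m, n)) : {set 'I_n} -> nat -> Prop :=
| dd_single (S : {set 'I_n}) k : #|S| = 1%N -> (1 <= k)%N -> dd_le B S k
| dd_disc (S : {set 'I_n}) k : #|S| <> 1%N -> ~~ connected B S ->
    (forall C : {set 'I_n}, component B S C -> dd_le B C k) -> dd_le B S k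
| dd_conn (S : {set 'I_n}) k (e : 'I_n) : #|S| <> 1%N -> connected B S -> e \in S ->
    dd_le B (S :\ e) k -> dd_le B S k.+1.

Definition dd m (B : 'M[F]_(m, n)) (S : {set 'I_n}) : nat :=
  epsilon (inhabits 0%N) (fun k => dd_le B S k /\ forall j, dd_le B S j -> (k <= j)%N).

(* dsd_le B S k  <->  dsd(M(B_S)) <= k.  Appending the row v^T to B_S is
   modelled by col_mx B v (entries of v outside S are irrelevant);
   B_C for a component C is modelled by restricting to C. *)
Inductive dsd_le : forall m, 'M[F]_(m, n) -> {set 'I_n} -> nat -> Prop :=
| dsd_indep m (B : 'M[F]_(m, n)) (S : {set 'I_n}) k : indep B S -> dsd_le B S k
| dsd_disc m (B : 'M[F]_(m, n)) (S : {set 'I_n}) k : ~~ indep B S -> ~~ connected B S ->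
    (forall C : {set 'I_n}, component B S C -> dsd_le B C k) -> dsd_le B S k
| dsd_conn m (B : 'M[F]_(m, n)) (S : {set 'I_n}) k (v : 'rV[F]_n) : ~~ indep B S -> connected B S ->
    dsd_le (col_mx B v) S k -> dsd_le B S k.+1.

Definition dsd m (B : 'M[F]_(m, n)) (S : {set 'I_n}) : nat :=
  epsilon (inhabits 0%N) (fun k => dsd_le B S k /\ forall j, dsd_le B S j -> (k <= j)%N).

End ColumnMatroid.

(* dsd <= dd: deleting an element e is simulated by appending the unit row at e, which
   makes e a coloop, so the restriction splits into M \ e and the coloop {e}.
   dd <= 2 ^ dsd: if dsd(M(B|S)) <= k, the row space of B|S is spanned by vectors of it
   supported on at most 2 ^ k columns.  Spanning sets of the components combine; when a
   row v is appended, v can be exchanged for some spanning vector u0, and subtracting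
   multiples of u0 from the other spanning vectors at most doubles their supports.
   Outside supp u0 the appended row is redundant, so M(B) agrees there with the matroid
   of B with v appended, and deleting the at most 2 ^ k elements of supp u0 costs at most
   2 ^ k in deletion-depth. *)

From mathcomp Require Import all_boot all_order all_algebra.
From Stdlib Require Import Classical ClassicalEpsilon Wf_nat.
From mathcomp Require Import zify.
Set Implicit Arguments. Unset Strict Implicit. Unset Printing Implicit Defensive.
Import GRing.Theory.
Local Open Scope ring_scope.

Section ColumnSupports.
Variables (F : fieldType) (n : nat).
Implicit Types (X Y : {set 'I_n}) (u w : 'rV[F]_n).

Definition diag_set X : 'M[F]_n := diag_mx (\row_j (j \in X)%:R).

Definition supp u : {set 'I_n} := [set j | u 0 j != 0].

Lemma diag_setE X i j : diag_set X i j = ((i == j) && (j \in X))%:R.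
Proof. by rewrite !mxE; case: eqP => [->|] /=; rewrite ?mulr1n ?mulr0n. Qed.

Lemma mul_diag_setE u X j : (u *m diag_set X) 0 j = if j \in X then u 0 j else 0.
Proof. by rewrite mul_mx_diag !mxE; case: (j \in X); rewrite ?mulr1 ?mulr0. Qed.

Lemma colresE m (B : 'M[F]_(m, n)) X : colres B X = B *m diag_set X.
Proof.
by apply/matrixP=> i j; rewrite mul_mx_diag !mxE; case: (j \in X); rewrite ?mulr1 ?mulr0.
Qed.

Lemma diag_setM X Y : diag_set X *m diag_set Y = diag_set (X :&: Y).
Proof.
rewrite mulmx_diag; congr diag_mx; apply/rowP=> j; rewrite !mxE in_setI.
by case: (j \in X); case: (j \in Y); rewrite ?mulr1 ?mulr0 ?mul0r.
Qed.

Lemma colres_sub m (B : 'M[F]_(m, n)) X Y :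
  Y \subset X -> colres B Y = colres B X *m diag_set Y.
Proof. by move=> sYX; rewrite !colresE -mulmxA diag_setM (setIidPr sYX). Qed.

Lemma colres_col_mx m (B : 'M[F]_(m, n)) (v : 'rV[F]_n) X :
  colres (col_mx B v) X = col_mx (colres B X) (colres v X).
Proof. by rewrite !colresE mul_col_mx. Qed.

Lemma supp_eq0 u : (supp u == set0) = (u == 0).
Proof.
apply/eqP/eqP=> [u0|->]; last by apply/setP=> j; rewrite !inE mxE eqxx.
apply/rowP=> j; rewrite mxE; apply/eqP; apply: contraT=> uj.
have: j \in supp u by rewrite inE.
by rewrite u0 inE.
Qed.

Lemma supp_sub_lin u w (c : F) : supp (u - c *: w) \subset supp u :|: supp w.
Proof.
apply/subsetP=> j; rewrite !inE !mxE; apply: contraR; rewrite negb_or !negbK.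
by case/andP=> /eqP-> /eqP->; rewrite mulr0 subrr.
Qed.

Lemma mul_diag_set_id u X : supp u \subset X -> u *m diag_set X = u.
Proof.
move=> suX; apply/rowP=> j; rewrite mul_diag_setE; case jX: (j \in X) => //.
by apply/esym/eqP; apply: contraFT jX => uj; apply: (subsetP suX); rewrite inE.
Qed.

Lemma mul_diag_set_eq0 u X : [disjoint supp u & X] -> u *m diag_set X = 0.
Proof.
move=> duX; apply/rowP=> j; rewrite mul_diag_setE mxE; case jX: (j \in X) => //.
apply/eqP; apply: contraTT jX => uj.
by rewrite (disjointFr duX) // inE.
Qed.

Lemma sub_diag_set u X : (u <= diag_set X)%MS = (supp u \subset X).
Proof.
apply/idP/idP=> [/submxP[w ->]|suX]; last by rewrite -(mul_diag_set_id suX) submxMl.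
apply/subsetP=> j; rewrite inE mul_diag_setE.
by case: (j \in X); rewrite ?eqxx.
Qed.

Lemma mxrank_diag_set_le X : (\rank (diag_set X) <= #|X|)%N.
Proof.
rewrite /diag_set diag_mx_sum_delta (bigID (mem X)) /=.
rewrite [X in (_ + X)%R]big1 ?addr0; last first.
  by move=> j /negbTE jX; rewrite mxE jX scale0r.
rewrite -sum1_card; elim/big_rec2: _ => [|j r A jX ltAr]; first by rewrite mxrank0.
apply: leq_trans (mxrank_add _ _) _.
by rewrite mxE jX scale1r mxrank_delta add1n ltnS.
Qed.

Lemma mxrank_diag_set X : \rank (diag_set X) = #|X|.
Proof.
have sumXC : diag_set X + diag_set (~: X) = 1%:M.
  apply/matrixP=> i j; rewrite [in LHS]mxE !diag_setE mxE in_setC.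
  by case: (i == j); case: (j \in X); rewrite /= ?addr0 ?add0r.
have := mxrank_add (diag_set X) (diag_set (~: X)); rewrite sumXC mxrank1.
have := mxrank_diag_set_le X; have := mxrank_diag_set_le (~: X).
have := cardsC X; rewrite card_ord; lia.
Qed.

(* Column dependencies of [B] are encoded as rows [u] with [u *m B^T = 0]. *)
Lemma indepP m (B : 'M[F]_(m, n)) X :
  indep B X <-> (forall u, u *m B^T = 0 -> supp u \subset X -> u = 0).
Proof.
rewrite /indep colresE -mxrank_tr trmx_mul tr_diag_mx.
have := mxrank_mul_ker (diag_set X) B^T; rewrite mxrank_diag_set => <-.
rewrite -{1}[\rank _]addn0 eqn_add2l eq_sym mxrank_eq0.
split=> [/eqP capX0 u uB suX | h].
  by apply/eqP; rewrite -submx0 -capX0 sub_capmx sub_diag_set suX sub_kermx uB eqxx.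
apply: contraT => nz; have := nz_row_sub (diag_set X :&: kermx B^T)%MS.
rewrite sub_capmx sub_diag_set => /andP[suX /sub_kermxP uB].
by move: nz; rewrite -nz_row_eq0 (h _ uB suX) eqxx.
Qed.

End ColumnSupports.
Arguments diag_set {F n} X.

Lemma not_disjoint (T : finType) (A C : {set T}) x :
  x \in A -> x \in C -> ~~ [disjoint A & C].
Proof. by move=> xA xC; apply/negP=> /disjointFr/(_ xA); rewrite xC. Qed.

Section Circuits.
Variables (F : fieldType) (m n : nat) (B : 'M[F]_(m, n)).
Implicit Types (C D X Y : {set 'I_n}) (u : 'rV[F]_n).

Definition is_circuit C : bool :=
  ~~ indep B C && [forall D : {set 'I_n}, (D \proper C) ==> indep B D].

Lemma circuitE S C : circuit B S C = (C \subset S) && is_circuit C.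
Proof. by []. Qed.

Lemma indepS X Y : X \subset Y -> indep B Y -> indep B X.
Proof.
move=> sXY /indepP iY; apply/indepP=> u uB suX.
by apply: iY uB (subset_trans suX sXY).
Qed.

Lemma indep0 : indep B set0.
Proof. by apply/indepP=> u _; rewrite subset0 supp_eq0 => /eqP. Qed.

Lemma dependentP X :
  ~~ indep B X -> exists u, [/\ u != 0, u *m B^T = 0 & supp u \subset X].
Proof.
move=> dX; apply: NNPP => noDep; case/negP: dX; apply/indepP=> u uB suX.
by apply/eqP; apply: contraT => nz; case: noDep; exists u.
Qed.

Lemma circuit_dep C : is_circuit C -> ~~ indep B C.
Proof. by case/andP. Qed.

Lemma circuit_min C D : is_circuit C -> is_circuit D -> D \subset C -> D = C.
Proof.
case/andP=> _ /forallP minC /andP[dD _] sDC; apply/eqP; rewrite eqEproper sDC.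
by apply: contra dD => pDC; apply: implyP (minC D) pDC.
Qed.

Lemma circuit_suppP C : is_circuit C -> exists u, u *m B^T = 0 /\ supp u = C.
Proof.
move=> cC; have /andP[dC /forallP minC] := cC.
have [u [nz uB suC]] := dependentP dC; exists u; split => //.
apply/eqP; rewrite eqEproper suC; apply: contra nz => pC.
by have /indepP iu := implyP (minC _) pC; rewrite (iu u uB (subxx _)).
Qed.

Lemma supp_elim u (z : 'rV[F]_n) i : supp z \subset supp u -> i \in supp z ->
  supp (u - (u 0 i / z 0 i) *: z) \subset supp u :\ i.
Proof.
move=> szu iz; apply/subsetP=> l lu; rewrite in_setD1; apply/andP; split.
  apply: contraTneq lu => ->; rewrite inE !mxE mulfVK ?subrr ?eqxx //.
  by rewrite inE in iz.
by case/setUP: (subsetP (supp_sub_lin u z _) l lu) => // /(subsetP szu).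
Qed.

Lemma circuit_in_supp u i : u *m B^T = 0 -> i \in supp u ->
  exists2 C, is_circuit C & (i \in C) && (C \subset supp u).
Proof.
have [k] := ubnP #|supp u|; elim: k u => // k IH u; rewrite ltnS => uk uB iu.
have [minu|] := boolP [forall D : {set 'I_n}, (D \proper supp u) ==> indep B D].
  exists (supp u); last by rewrite iu subxx.
  rewrite /is_circuit minu andbT.
  by apply/negP=> /indepP/(_ u uB (subxx _)) u0; rewrite u0 inE mxE eqxx in iu.
case/forallPn=> D; rewrite negb_imply => /andP[pD /dependentP[z [nz zB szD]]].
have pzu : supp z \proper supp u := sub_proper_trans szD pD.
have [iz|niz] := boolP (i \in supp z).
  have [C cC /andP[iC sCz]] := IH z (leq_trans (proper_card pzu) uk) zB iz.
  by exists C; rewrite ?iC ?(subset_trans sCz (proper_sub pzu)).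
have [j jz] : exists j, j \in supp z by apply/set0Pn; rewrite supp_eq0.
set u' := u - (u 0 j / z 0 j) *: z.
have su' : supp u' \subset supp u :\ j := supp_elim (proper_sub pzu) jz.
have u'B : u' *m B^T = 0 by rewrite mulmxBl -scalemxAl zB scaler0 uB subr0.
have iu' : i \in supp u'.
  by move: iu niz; rewrite !inE !mxE negbK => iu /eqP->; rewrite mulr0 subr0.
have ju : j \in supp u := subsetP (proper_sub pzu) j jz.
have lt_u' : (#|supp u'| < k)%N.
  exact: leq_trans (proper_card (sub_proper_trans su' (properD1 ju))) uk.
have [C cC /andP[iC sCu']] := IH u' lt_u' u'B iu'.
by exists C; rewrite ?iC ?(subset_trans sCu' (subset_trans su' (subD1set _ _))).
Qed.

Lemma circuit_elim C1 C2 y f : is_circuit C1 -> is_circuit C2 ->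
    y \in C1 -> y \in C2 -> f \in C1 -> f \notin C2 ->
  exists C, [/\ is_circuit C, f \in C & C \subset (C1 :|: C2) :\ y].
Proof.
move=> cC1 cC2 yC1 yC2 fC1 fC2.
have [u1 [u1B su1]] := circuit_suppP cC1; have [u2 [u2B su2]] := circuit_suppP cC2.
set w := u2 0 y *: u1 - u1 0 y *: u2.
have wB : w *m B^T = 0 by rewrite mulmxBl -!scalemxAl u1B u2B !scaler0 subrr.
have fw : f \in supp w.
  move: fC1 fC2 yC2; rewrite -su1 -su2 !inE !mxE negbK => u1f /eqP-> u2y.
  by rewrite mulr0 subr0 mulf_neq0.
have [C cC /andP[fC sCw]] := circuit_in_supp wB fw.
exists C; split => //; apply: subset_trans sCw _; apply/subsetP=> l.
rewrite -su1 -su2 !inE !mxE.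
case: (eqVneq l y) => [->|_] /=; first by rewrite mulrC subrr eqxx.
apply: contraNT; rewrite negb_or !negbK => /andP[/eqP-> /eqP->].
by rewrite !mulr0 subrr.
Qed.

Lemma circuit_meets_setD C1 C2 D y : is_circuit C1 -> is_circuit D ->
    y \in C1 -> y \notin D -> D \subset C1 :|: C2 ->
  exists w, [/\ w \in D, w \in C2 & w \notin C1].
Proof.
move=> cC1 cD yC1 yD sD; apply: NNPP => noW.
have sDC1 : D \subset C1.
  apply/subsetP=> l lD; apply: contraT => lC1; case: noW; exists l; split => //.
  by case/setUP: (subsetP sD l lD) lC1 => [->|].
by move: yD; rewrite (circuit_min cC1 cD sDC1) yC1.
Qed.

(* The key step towards transitivity of "lying in a common circuit". *)
Lemma circuit_through C1 C2 x z : is_circuit C1 -> is_circuit C2 ->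
    ~~ [disjoint C1 & C2] -> x \in C1 -> z \in C2 ->
  exists C, [/\ is_circuit C, x \in C, z \in C & C \subset C1 :|: C2].
Proof.
have [k] := ubnP #|C1 :|: C2|; elim: k C1 C2 => // k IH C1 C2.
rewrite ltnS => Uk cC1 cC2 meet xC1 zC2; set U := C1 :|: C2 in Uk *.
have IHU D1 D2 : D1 :|: D2 \subset U -> (#|D1 :|: D2| < #|U|)%N ->
    is_circuit D1 -> is_circuit D2 -> ~~ [disjoint D1 & D2] -> x \in D1 -> z \in D2 ->
  exists C, [/\ is_circuit C, x \in C, z \in C & C \subset U].
  move=> sDU ltDU cD1 cD2 mD xD1 zD2.
  have [C [cC xC zC sCD]] := IH D1 D2 (leq_trans ltDU Uk) cD1 cD2 mD xD1 zD2.
  by exists C; split => //; apply: subset_trans sCD sDU.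
have [xC2|xC2] := boolP (x \in C2); first by exists C2; rewrite ?subsetUr.
have [zC1|zC1] := boolP (z \in C1); first by exists C1; rewrite ?subsetUl.
have [y /setIP[yC1 yC2]] : exists y, y \in C1 :&: C2.
  by apply/set0Pn; rewrite setI_eq0.
have [D1 [cD1 xD1 sD1]] := circuit_elim cC1 cC2 yC1 yC2 xC1 xC2.
have [D2 [cD2 zD2 sD2]] := circuit_elim cC2 cC1 yC2 yC1 zC2 zC1.
rewrite setUC -/U in sD2.
have yD1 : y \notin D1 by apply/negP=> /(subsetP sD1); rewrite !inE eqxx.
have yD2 : y \notin D2 by apply/negP=> /(subsetP sD2); rewrite !inE eqxx.
have sD1U : D1 \subset U := subset_trans sD1 (subD1set _ _).
have sD2U : D2 \subset U := subset_trans sD2 (subD1set _ _).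
have [zD1|zD1] := boolP (z \in D1); first by exists D1.
have [xD2|xD2] := boolP (x \in D2); first by exists D2.
have [w [wD1 wC2 wC1]] := circuit_meets_setD cC1 cD1 yC1 yD1 sD1U.
have [w' [w'D2 w'C1 w'C2]] : exists w, [/\ w \in D2, w \in C1 & w \notin C2].
  by apply: circuit_meets_setD cC2 cD2 yC2 yD2 _; rewrite setUC.
have [ltU|geU] := ltnP #|C1 :|: D2| #|U|.
  by apply: IHU ltU cC1 cD2 (not_disjoint w'C1 w'D2) xC1 zD2; rewrite subUset subsetUl.
have eqU : C1 :|: D2 = U by apply/eqP; rewrite eqEcard geU subUset subsetUl sD2U.
have wU : w \in U by rewrite /U inE wC2 orbT.
have wD2 : w \in D2 by move: wU; rewrite -eqU inE (negbTE wC1).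
apply: IHU cD1 cD2 (not_disjoint wD1 wD2) xD1 zD2; first by rewrite subUset sD1U.
have yU : y \in U by rewrite /U inE yC1.
by apply: proper_card; apply: sub_proper_trans (properD1 yU); rewrite subUset sD1.
Qed.

End Circuits.

Section Components.
Variables (F : fieldType) (m n : nat) (B : 'M[F]_(m, n)).
Implicit Types (C D S T X Y : {set 'I_n}) (u : 'rV[F]_n).

Lemma connectedP T :
  reflect (forall e f, e \in T -> f \in T -> e != f ->
             exists C, [/\ C \subset T, is_circuit B C, e \in C & f \in C])
          (connected B T).
Proof.
apply: (iffP forall_inP) => [conn e f eT fT nef | conn e eT].
  have /forall_inP/(_ f fT) := conn e eT; rewrite nef => /existsP[C].
  by rewrite circuitE => /and3P[/andP[sCT cC] eC fC]; exists C.
apply/forall_inP=> f fT; apply/implyP=> nef.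
have [C [sCT cC eC fC]] := conn e f eT fT nef.
by apply/existsP; exists C; rewrite circuitE sCT cC eC fC.
Qed.

Lemma connected_circuit C : is_circuit B C -> connected B C.
Proof. by move=> cC; apply/connectedP=> e f eC fC _; exists C. Qed.

Lemma connected_small T : (#|T| <= 1)%N -> connected B T.
Proof.
move=> T1; apply/connectedP=> e f eT fT nef; suff: (1 < #|T|)%N by rewrite ltnNge T1.
rewrite (cardsD1 e) eT add1n ltnS card_gt0.
by apply/set0Pn; exists f; rewrite !inE eq_sym nef.
Qed.

Lemma connected_indep T : indep B T -> connected B T -> (#|T| <= 1)%N.
Proof.
move=> iT /connectedP conn; rewrite leqNgt; apply/negP=> T2.
have [e eT] : exists e, e \in T by apply/card_gt0P; apply: ltnW.
have [f /setD1P[nfe fT]] : exists f, f \in T :\ e.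
  by apply/card_gt0P; move: T2; rewrite (cardsD1 e) eT.
rewrite eq_sym in nfe; have [C [sCT cC _ _]] := conn e f eT fT nfe.
by case/negP: (circuit_dep cC); apply: indepS iT.
Qed.

Lemma connectedU T1 T2 : connected B T1 -> connected B T2 -> ~~ [disjoint T1 & T2] ->
  connected B (T1 :|: T2).
Proof.
move=> /connectedP conn1 /connectedP conn2 meet.
have [g /setIP[g1 g2]] : exists g, g \in T1 :&: T2 by apply/set0Pn; rewrite setI_eq0.
have hub e : e \in T1 :|: T2 -> e != g ->
    exists C, [/\ C \subset T1 :|: T2, is_circuit B C, e \in C & g \in C].
  case/setUP=> [e1|e2] neg.
    have [C [sC cC eC gC]] := conn1 e g e1 g1 neg.
    by exists C; rewrite (subset_trans sC (subsetUl _ _)).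
  have [C [sC cC eC gC]] := conn2 e g e2 g2 neg.
  by exists C; rewrite (subset_trans sC (subsetUr _ _)).
apply/connectedP=> e f eT fT nef.
have [eg|neg] := eqVneq e g.
  rewrite eg eq_sym in nef; have [C [sC cC fC gC]] := hub f fT nef.
  by exists C; rewrite eg.
have [fg|nfg] := eqVneq f g.
  by have [C [sC cC eC gC]] := hub e eT neg; exists C; rewrite fg.
have [Ce [sCe cCe eCe gCe]] := hub e eT neg.
have [Cf [sCf cCf fCf gCf]] := hub f fT nfg.
have [C [cC eC fC sC]] := circuit_through cCe cCf (not_disjoint gCe gCf) eCe fCf.
by exists C; split=> //; apply: subset_trans sC _; rewrite subUset sCe.
Qed.

Lemma componentP S C :
  reflect [/\ C \subset S, C != set0, connected B C &
              forall D, C \proper D -> D \subset S -> ~~ connected B D]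
          (component B S C).
Proof.
apply: (iffP and4P) => [[sCS nC cC /forallP maxC]|[sCS nC cC maxC]].
  by split=> // D pCD sDS; have /implyP := maxC D; apply; rewrite pCD.
by split=> //; apply/forallP=> D; apply/implyP=> /andP[]; apply: maxC.
Qed.

Lemma component_max S C D : component B S C ->
  D \subset S -> connected B D -> ~~ [disjoint C & D] -> D \subset C.
Proof.
case/componentP=> sCS _ cC maxC sDS cD meet; apply: contraT => sDC.
have sCDS : C :|: D \subset S by rewrite subUset sCS.
by move: (maxC _ (properUl sDC) sCDS); rewrite connectedU.
Qed.

Lemma component_exists S C : C \subset S -> C != set0 -> connected B C ->
  exists2 C', component B S C' & C \subset C'.
Proof.
move=> sCS nC cC.
pose P := [pred D : {set 'I_n} | (D \subset S) && connected B D].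
have [C' /maxsetP[/andP[sC'S cC'] maxC'] sCC'] := @maxset_exists _ P C (introT andP (conj sCS cC)).
exists C' => //; apply/componentP; split=> // [|D pC'D sDS].
  by apply: contraNneq nC => C'0; rewrite -subset0 -C'0.
apply/negP=> cD; have DC' := maxC' D (introT andP (conj sDS cD)) (proper_sub pC'D).
by rewrite DC' properxx in pC'D.
Qed.

Lemma component_eq S C1 C2 : component B S C1 -> component B S C2 ->
  ~~ [disjoint C1 & C2] -> C1 = C2.
Proof.
move=> compC1 compC2 meet; have /componentP[sC1S _ cC1 _] := compC1.
have /componentP[sC2S _ cC2 _] := compC2.
apply/eqP; rewrite eqEsubset (component_max compC2 sC1S cC1) 1?disjoint_sym //.
exact: component_max compC1 sC2S cC2 meet.
Qed.

Lemma component_cover S j : j \in S -> exists2 C, component B S C & j \in C.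
Proof.
move=> jS; have sjS : [set j] \subset S by rewrite sub1set.
have nj : [set j] != set0 by apply/set0Pn; exists j; rewrite set11.
have [C compC sjC] := component_exists sjS nj (connected_small (eq_leq (cards1 j))).
by exists C; rewrite -?sub1set.
Qed.

Lemma componentS S T C : component B S C -> C \subset T -> T \subset S -> component B T C.
Proof.
case/componentP=> _ nC cC maxC sCT sTS; apply/componentP; split=> // D pCD sDT.
exact: maxC pCD (subset_trans sDT sTS).
Qed.

Lemma component_connected S C : component B S C -> connected B S -> C = S.
Proof.
move=> compC cS; have /componentP[sCS nC _ _] := compC.
apply/eqP; rewrite eqEsubset sCS (component_max compC (subxx S) cS) //.
by have [j jC] := set0Pn _ nC; apply: not_disjoint jC (subsetP sCS j jC).
Qed.

(* Components are separators: a column dependency splits along them. *)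
Lemma dependency_component S C u : component B S C ->
  u *m B^T = 0 -> supp u \subset S -> u *m diag_set C *m B^T = 0.
Proof.
move=> compC; have [k] := ubnP #|supp u|; elim: k u => // k IH u.
rewrite ltnS => uk uB suS; have [->|nz] := eqVneq u 0; first by rewrite !mul0mx.
have [i iu] : exists i, i \in supp u by apply/set0Pn; rewrite supp_eq0.
have [C' cC' /andP[iC' sC'u]] := circuit_in_supp uB iu.
have [z [zB szC']] := circuit_suppP cC'.
have zCB : z *m diag_set C *m B^T = 0.
  have [dC'C|mC'C] := boolP [disjoint C' & C].
    by rewrite mul_diag_set_eq0 ?szC' ?mul0mx.
  have sC'C := component_max compC (subset_trans sC'u suS) (connected_circuit cC').
  by rewrite mul_diag_set_id ?szC' ?sC'C 1?disjoint_sym.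
set u' := u - (u 0 i / z 0 i) *: z.
have su' : supp u' \subset supp u :\ i by apply: supp_elim; rewrite szC'.
have u'B : u' *m B^T = 0 by rewrite mulmxBl -scalemxAl zB scaler0 uB subr0.
have lt_u' : (#|supp u'| < k)%N.
  exact: leq_trans (proper_card (sub_proper_trans su' (properD1 iu))) uk.
have := IH u' lt_u' u'B (subset_trans su' (subset_trans (subD1set _ _) suS)).
by rewrite /u' !mulmxBl -!scalemxAl zCB scaler0 subr0.
Qed.

Lemma colres_component_sub S C : component B S C -> (colres B C <= colres B S)%MS.
Proof.
move=> compC; have /componentP[sCS _ _ _] := compC.
rewrite submxE (colres_sub B sCS); set W := colres B S.
apply/eqP/trmx_inj; rewrite trmx0; apply/row_matrixP=> i; rewrite row0.
have rWT : row i (cokermx W)^T *m W^T = 0.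
  by rewrite -row_mul -trmx_mul mulmx_coker trmx0 row0.
set r := row i (cokermx W)^T in rWT *.
rewrite /W colresE trmx_mul tr_diag_mx mulmxA in rWT.
have suS : supp (r *m diag_set S) \subset S by rewrite -sub_diag_set submxMl.
have := dependency_component compC rWT suS.
rewrite -[r *m _ *m diag_set C]mulmxA diag_setM (setIidPr sCS) => rCB.
rewrite trmx_mul row_mul -/r trmx_mul tr_diag_mx /W colresE trmx_mul tr_diag_mx.
by rewrite !mulmxA -[r *m _ *m diag_set S]mulmxA diag_setM (setIidPl sCS).
Qed.

Lemma colres_sum_components S : colres B S = \sum_(C | component B S C) colres B C.
Proof.
apply/matrixP=> i j; rewrite summxE /colres !mxE.
under eq_bigr do rewrite mxE.
have [jS|jS] := boolP (j \in S).
  have [C0 compC0 jC0] := component_cover jS.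
  rewrite (bigD1 C0) //= jC0 big1 ?addr0 // => C /andP[compC neC].
  case: ifP => // jC; case/eqP: neC.
  exact: component_eq compC compC0 (not_disjoint jC jC0).
rewrite big1 // => C /componentP[sCS _ _ _]; case: ifP => // jC.
by case/negP: jS; apply: subsetP sCS j jC.
Qed.

End Components.

Section EqIndep.
Variables (F : fieldType) (m1 m2 n : nat) (B1 : 'M[F]_(m1, n)) (B2 : 'M[F]_(m2, n)).
Variable T : {set 'I_n}.
Implicit Types C X Y : {set 'I_n}.
Hypothesis eq_indepT : forall Y, Y \subset T -> indep B1 Y = indep B2 Y.

Lemma eq_circuit C : C \subset T -> is_circuit B1 C = is_circuit B2 C.
Proof.
move=> sCT; rewrite /is_circuit eq_indepT //; congr andb; apply: eq_forallb => D.
have [pDC|//] := boolP (D \proper C).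
by rewrite eq_indepT // (subset_trans (proper_sub pDC)).
Qed.

Lemma eq_connected X : X \subset T -> connected B1 X = connected B2 X.
Proof.
move=> sXT; apply/connectedP/connectedP=> conn e f eX fX nef;
  have [C [sCX cC eC fC]] := conn e f eX fX nef; exists C; split=> //.
  by rewrite -(eq_circuit (subset_trans sCX sXT)).
by rewrite (eq_circuit (subset_trans sCX sXT)).
Qed.

Lemma eq_component C : component B1 T C = component B2 T C.
Proof.
apply/componentP/componentP=> -[sCT nC cC maxC].
  split=> //; first by rewrite -(eq_connected sCT).
  by move=> D pCD sDT; rewrite -(eq_connected sDT); apply: maxC.
split=> //; first by rewrite (eq_connected sCT).
by move=> D pCD sDT; rewrite (eq_connected sDT); apply: maxC.
Qed.

End EqIndep.

Section DeletionDepth.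
Variables (F : fieldType) (m n : nat) (B : 'M[F]_(m, n)).
Implicit Types (C D S T X Y Z : {set 'I_n}).

Lemma dd_leS T k : dd_le B T k -> dd_le B T k.+1.
Proof.
elim=> {T k} [T k T1 k1|T k T1 nT _ IH|T k e T1 cT eT _ IH].
- by apply: dd_single; rewrite // ltnW.
- exact: dd_disc.
- exact: dd_conn IH.
Qed.

Lemma dd_leW T k k' : (k <= k')%N -> dd_le B T k -> dd_le B T k'.
Proof. by move=> /subnK<-; elim: (k' - k)%N => //= j IH /IH/dd_leS. Qed.

(* Only nonempty restrictions are constrained: [dd_le B set0 k] never holds. *)
Definition dd_bounded X k := forall Y, Y \subset X -> Y != set0 -> dd_le B Y k.

Lemma dd_boundedW X k k' : (k <= k')%N -> dd_bounded X k -> dd_bounded X k'.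
Proof. by move=> lekk' ddX Y sYX nY; apply: dd_leW lekk' (ddX Y sYX nY). Qed.

Lemma dd_boundedS X Y k : Y \subset X -> dd_bounded X k -> dd_bounded Y k.
Proof. by move=> sYX ddX Z sZY; apply: ddX (subset_trans sZY sYX). Qed.

Lemma dd_bounded_connected X k :
    (forall Z, Z \subset X -> Z != set0 -> connected B Z -> dd_le B Z k) ->
  dd_bounded X k.
Proof.
move=> ddconn Y sYX nY; have [cY|ncY] := boolP (connected B Y); first exact: ddconn.
apply: dd_disc => [Y1|//|C /componentP[sCY nC cC _]].
  by case/negP: ncY; apply: connected_small; rewrite Y1.
exact: ddconn (subset_trans sCY sYX) nC cC.
Qed.

Lemma dd_bounded_components S k :
  (forall C, component B S C -> dd_bounded C k) -> dd_bounded S k.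
Proof.
move=> ddC; apply: dd_bounded_connected => Z sZS nZ cZ.
by have [C compC sZC] := component_exists sZS nZ cZ; apply: ddC compC Z sZC nZ.
Qed.

Lemma dd_bounded_indep Y : indep B Y -> dd_bounded Y 1.
Proof.
move=> iY; apply: dd_bounded_connected => Z sZY nZ cZ; apply: dd_single => //.
by apply/eqP; rewrite eqn_leq card_gt0 nZ (connected_indep (indepS sZY iY) cZ).
Qed.

Lemma dd_bounded_setD1 X e k : dd_bounded (X :\ e) k -> dd_bounded X k.+1.
Proof.
move=> ddXe; apply: dd_bounded_connected => Z sZX nZ cZ.
have [Z1|nZ1] := eqVneq #|Z| 1%N; first exact: dd_single.
have [eZ|eZ] := boolP (e \in Z); last first.
  apply/dd_leS/ddXe => //; apply/subsetP=> j jZ; rewrite !inE (subsetP sZX) // andbT.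
  by apply: contraNneq eZ => <-.
apply: (dd_conn (e := e)) => //; first exact/eqP.
apply: ddXe; first exact: setSD.
by apply: contra_neq nZ1 => Ze0; rewrite (cardsD1 e) eZ Ze0 cards0.
Qed.

Lemma dd_bounded_setD X D k : dd_bounded (X :\: D) k -> dd_bounded X (k + #|D|).
Proof.
have [j] := ubnP #|D|; elim: j D k => // j IH D k; rewrite ltnS => Dj ddXD.
have [D0|[e eD]] := set_0Vmem D.
  by move: ddXD; rewrite D0 setD0 cards0 addn0.
rewrite (cardsD1 e) eD add1n addnS -addSn; apply: IH.
  by move: Dj; rewrite (cardsD1 e) eD.
apply: (dd_bounded_setD1 (e := e)) (dd_boundedS _ ddXD).
by apply/subsetP=> l; rewrite !inE; case: (l == e); case: (l \in D).
Qed.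

Lemma dd_bounded_card X : dd_bounded X #|X|.
Proof.
rewrite -[#|X|]add0n; apply: dd_bounded_setD => Y.
by rewrite setDv subset0 => /eqP->; rewrite eqxx.
Qed.

End DeletionDepth.

Lemma eq_dd_le (F : fieldType) m1 m2 n (B1 : 'M[F]_(m1, n)) (B2 : 'M[F]_(m2, n))
    (T : {set 'I_n}) k :
  (forall Y : {set 'I_n}, Y \subset T -> indep B1 Y = indep B2 Y) ->
  dd_le B1 T k -> dd_le B2 T k.
Proof.
move=> + dd1; elim: dd1 => {T k} [T k T1 k1 _|T k T1 ncT _ IH eqT|T k e T1 cT eT _ IH eqT].
- exact: dd_single.
- apply: dd_disc => //; first by rewrite -(eq_connected eqT (subxx T)).
  move=> C; rewrite -(eq_component eqT) => compC; apply: IH => // Y sYC; apply: eqT.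
  by case/componentP: compC => sCT _ _ _; apply: subset_trans sYC sCT.
- apply: (dd_conn (e := e)) => //; first by rewrite -(eq_connected eqT (subxx T)).
  by apply: IH => Y sY; apply: eqT; apply: subset_trans sY (subD1set _ _).
Qed.

Section RowSpaces.
Variables (F : fieldType) (n : nat).
Implicit Types (u w : 'rV[F]_n) (s : seq 'rV[F]_n).

Lemma sub_col_mxl p q (A : 'M[F]_(p, n)) (C : 'M[F]_(q, n)) : (A <= col_mx A C)%MS.
Proof. by rewrite -addsmxE addsmxSl. Qed.

Lemma sub_col_mxr p q (A : 'M[F]_(p, n)) (C : 'M[F]_(q, n)) : (C <= col_mx A C)%MS.
Proof. by rewrite -addsmxE addsmxSr. Qed.

(* The coefficient of [u] in some decomposition of [w] over the rows of [col_mx W u]. *)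
Definition row_coef p (W : 'M[F]_(p, n)) u w : F :=
  rsubmx (w *m pinvmx (col_mx W u)) 0 0.

Lemma row_coefP p (W : 'M[F]_(p, n)) u w :
  (w <= col_mx W u)%MS -> (w - row_coef W u w *: u <= W)%MS.
Proof.
move=> /mulmxKpV; rewrite /row_coef; set a := w *m _ => wE.
rewrite -{1}wE -{1}[a]hsubmxK mul_row_col [X in X *m u]mx11_scalar mul_scalar_mx.
by rewrite addrK submxMl.
Qed.

Lemma exchange_row p (W : 'M[F]_(p, n)) u w :
  (w <= col_mx W u)%MS -> ~~ (w <= W)%MS -> (u <= col_mx W w)%MS.
Proof.
move=> /row_coefP wuW wW; set c := row_coef W u w in wuW.
have c0 : c != 0 by apply: contraNneq wW => c0; rewrite c0 scale0r subr0 in wuW.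
have -> : u = c^-1 *: (w - (w - c *: u)) by rewrite subKr scalerA mulVf ?scale1r.
apply/scalemx_sub/addmx_sub; first exact: sub_col_mxr.
by rewrite eqmx_opp (submx_trans wuW) ?sub_col_mxl.
Qed.

Lemma col_mx_row_redundant p q (W : 'M[F]_(p, n)) (T : 'M[F]_(q, n)) u :
  (T <= W)%MS -> ~~ (u <= W)%MS -> (W <= col_mx T u)%MS -> (W <= T)%MS.
Proof.
move=> sTW uW sW; apply/row_subP=> i.
have /row_coefP := submx_trans (row_sub i W) sW; set c := row_coef T u _.
have [-> | c0] := eqVneq c 0; first by rewrite scale0r subr0.
move=> wuT; case/negP: uW.
have -> : u = c^-1 *: (row i W - (row i W - c *: u)).
  by rewrite subKr scalerA mulVf ?scale1r.
apply/scalemx_sub/addmx_sub; first exact: row_sub.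
by rewrite eqmx_opp (submx_trans wuT).
Qed.

Definition rspan s : 'M[F]_n := (\sum_(u <- s) <<u>>)%MS.

Lemma rspan_sup s u : u \in s -> (u <= rspan s)%MS.
Proof.
by move=> us; rewrite /rspan (big_rem u us) /= (submx_trans _ (addsmxSl _ _)) ?genmxE.
Qed.

Lemma rspan_sub p s (W : 'M[F]_(p, n)) : {in s, forall u, u <= W}%MS -> (rspan s <= W)%MS.
Proof.
move=> sW; rewrite /rspan big_seq.
apply: (big_ind (fun A : 'M_n => A <= W)%MS) => [|A C sAW sCW|u us]; first exact: sub0mx.
  by rewrite addsmx_sub sAW.
by rewrite genmxE sW.
Qed.

Lemma rspan_cat s1 s2 : rspan (s1 ++ s2) = (rspan s1 + rspan s2)%MS.
Proof. exact: big_cat. Qed.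

End RowSpaces.

Section SparseSpanning.
Variables (F : fieldType) (n : nat).
Implicit Types (S Y : {set 'I_n}) (u v : 'rV[F]_n) (s : seq 'rV[F]_n).

Definition sparsely_spanned m (B : 'M[F]_(m, n)) S c :=
  exists2 s, {in s, forall u, (#|supp u| <= c)%N /\ (u <= colres B S)%MS}
           & (colres B S <= rspan s)%MS.

Lemma sparsely_spannedW m (B : 'M[F]_(m, n)) S c c' :
  (c <= c')%N -> sparsely_spanned B S c -> sparsely_spanned B S c'.
Proof.
move=> lecc' [s ss sS]; exists s => // u us.
by have [uc uS] := ss u us; rewrite (leq_trans uc).
Qed.

Lemma sparsely_spanned_indep m (B : 'M[F]_(m, n)) S : indep B S -> sparsely_spanned B S 1.
Proof.
move=> iS; have sBD : (colres B S <= diag_set S)%MS by rewrite colresE submxMl.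
have sDB : (diag_set S <= colres B S)%MS.
  by rewrite -(mxrank_leqif_sup sBD) mxrank_diag_set (eqP iS).
exists [seq row j (diag_set S) | j <- enum 'I_n] => [_ /mapP[j _ ->]|].
  split; last exact: submx_trans (row_sub j _) sDB.
  rewrite -(cards1 j) subset_leq_card //; apply/subsetP=> l.
  rewrite !inE mxE diag_setE.
  by rewrite [l == j]eq_sym; case: (j == l) => //; rewrite mulr0n eqxx.
apply: submx_trans sBD _; apply/row_subP=> j.
by apply: rspan_sup; apply: map_f; rewrite mem_enum.
Qed.

Lemma sparsely_spanned_components m (B : 'M[F]_(m, n)) S c :
  (forall C, component B S C -> sparsely_spanned B C c) -> sparsely_spanned B S c.
Proof.
move=> spanC.
pose spanned (A : 'M[F]_(m, n)) := exists2 s,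
  {in s, forall u, (#|supp u| <= c)%N /\ (u <= colres B S)%MS} & (A <= rspan s)%MS.
suff: spanned (\sum_(C | component B S C) colres B C) by rewrite -colres_sum_components.
apply: big_ind => [|A1 A2 [s1 ss1 sA1] [s2 ss2 sA2]|C compC].
- by exists [::]; rewrite ?sub0mx.
- exists (s1 ++ s2) => [u|]; first by rewrite mem_cat => /orP[/ss1|/ss2].
  rewrite rspan_cat; apply: addmx_sub; first exact: submx_trans sA1 (addsmxSl _ _).
  exact: submx_trans sA2 (addsmxSr _ _).
- have [s ss sC] := spanC C compC; exists s => // u /ss[uc uC].
  by rewrite uc (submx_trans uC) ?colres_component_sub.
Qed.

Lemma exchange_pivot p (W : 'M[F]_(p, n)) v s :
    ~~ (v <= W)%MS -> {in s, forall u, u <= col_mx W v}%MS ->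
    (col_mx W v <= rspan s)%MS ->
  exists2 u0, u0 \in s & ~~ (u0 <= W)%MS /\ (v <= col_mx W u0)%MS.
Proof.
move=> vW sWv Wvs; have [u0 u0s u0W] : exists2 u0, u0 \in s & ~~ (u0 <= W)%MS.
  apply: NNPP => noU0; case/negP: vW.
  apply: submx_trans (submx_trans (sub_col_mxr W v) Wvs) (rspan_sub _) => u us.
  by apply: contraT => uW; case: noU0; exists u.
by exists u0 => //; split => //; apply: exchange_row (sWv _ u0s) u0W.
Qed.

Lemma sparsely_spanned_col_mx m (B : 'M[F]_(m, n)) v S c :
  sparsely_spanned (col_mx B v) S c -> sparsely_spanned B S (c + c).
Proof.
rewrite /sparsely_spanned colres_col_mx; set W := colres B S; set v' := colres v S.
case=> s ss sWv; have [vW|vW] := boolP (v' <= W)%MS.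
  exists s => [u us|]; last exact: submx_trans (sub_col_mxl W v') sWv.
  have [uc uWv] := ss u us; split; first exact: leq_trans uc (leq_addr _ _).
  by rewrite (submx_trans uWv) // col_mx_sub submx_refl.
have [u0 u0s [u0W vWu0]] := exchange_pivot vW (fun u us => (ss u us).2) sWv.
have sWvu0 : (col_mx W v' <= col_mx W u0)%MS by rewrite col_mx_sub sub_col_mxl.
pose t := [seq u - row_coef W u0 u *: u0 | u <- s].
have tW u : u \in s -> (u - row_coef W u0 u *: u0 <= W)%MS.
  by move=> us; apply/row_coefP/(submx_trans (ss u us).2).
exists t => [_ /mapP[u us ->]|].
  split; last exact: tW.
  apply: leq_trans (subset_leq_card (supp_sub_lin _ _ _)) _.
  apply: leq_trans (leq_card_setU _ _) _.
  by apply: leq_add; [apply: (ss u us).1 | apply: (ss u0 u0s).1].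
apply: col_mx_row_redundant u0W _.
  by apply: rspan_sub => _ /mapP[u us ->]; apply: tW.
apply: submx_trans (submx_trans (sub_col_mxl W v') sWv) (rspan_sub _) => u us.
rewrite -(subrK (row_coef W u0 u *: u0) u) addmx_sub //.
  by apply: submx_trans (sub_col_mxl _ _); apply: rspan_sup; apply: map_f.
by apply/scalemx_sub/sub_col_mxr.
Qed.

Lemma appended_row_redundant m (B : 'M[F]_(m, n)) v S c :
  sparsely_spanned (col_mx B v) S c ->
  exists2 D : {set 'I_n}, (#|D| <= c)%N &
    forall Y, Y \subset S :\: D -> (colres v Y <= colres B Y)%MS.
Proof.
rewrite /sparsely_spanned colres_col_mx; set W := colres B S; set v' := colres v S.
case=> s ss sWv; have [vW|vW] := boolP (v' <= W)%MS.
  exists set0 => [|Y /subset_trans/(_ (subsetDl _ _)) sYS]; first by rewrite cards0.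
  by rewrite (colres_sub v sYS) (colres_sub B sYS) submxMr.
have [u0 u0s [_ vWu0]] := exchange_pivot vW (fun u us => (ss u us).2) sWv.
exists (supp u0) => [|Y sYSu0]; first exact: (ss u0 u0s).1.
have sYS : Y \subset S := subset_trans sYSu0 (subsetDl _ _).
have u0Y : u0 *m diag_set Y = 0.
  apply: mul_diag_set_eq0; rewrite disjoint_sym disjoint_subset.
  by apply: subset_trans sYSu0 _; apply/subsetP=> j; rewrite !inE => /andP[].
rewrite (colres_sub v sYS) (colres_sub B sYS) -/v' -/W.
by rewrite (submx_trans (submxMr _ vWu0)) // mul_col_mx u0Y -addsmxE addsmx0.
Qed.

Lemma dsd_sparsely_spanned m (B : 'M[F]_(m, n)) S k :
  dsd_le B S k -> sparsely_spanned B S (2 ^ k).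
Proof.
elim=> {m B S k} [m B S k iS|m B S k _ _ _ IH|m B S k v _ _ _ IH].
- by apply: sparsely_spannedW (sparsely_spanned_indep iS); rewrite expn_gt0.
- exact: sparsely_spanned_components.
- by rewrite expnS mul2n -addnn; apply: sparsely_spanned_col_mx IH.
Qed.

End SparseSpanning.

Section DepthComparison.
Variables (F : fieldType) (n : nat).
Implicit Types (C S T Y : {set 'I_n}).

Lemma eqmx_colres_indep m1 m2 (B1 : 'M[F]_(m1, n)) (B2 : 'M[F]_(m2, n)) S Y :
  (colres B1 S == colres B2 S)%MS -> Y \subset S -> indep B1 Y = indep B2 Y.
Proof.
move/eqmxP=> eqS sYS; rewrite /indep (colres_sub B1 sYS) (colres_sub B2 sYS).
by rewrite (eqmxMr _ eqS).
Qed.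

Lemma colres_col_mx_redundant m (B : 'M[F]_(m, n)) (v : 'rV[F]_n) S :
  (colres v S <= colres B S)%MS -> (colres (col_mx B v) S == colres B S)%MS.
Proof.
move=> vB; rewrite colres_col_mx; apply/eqmxP.
exact: eqmx_trans (eqmx_sym (addsmxE _ _)) (addsmx_idPl vB).
Qed.

Lemma dd_bounded_dsd_le m (B : 'M[F]_(m, n)) S k :
  dsd_le B S k -> dd_bounded B S (2 ^ k).
Proof.
elim=> {m B S k} [m B S k iS|m B S k _ _ _ IH|m B S k v _ _ dsdv IH].
- by apply: dd_boundedW (dd_bounded_indep iS); rewrite expn_gt0.
- exact: dd_bounded_components.
have [D cardD vB] := appended_row_redundant (dsd_sparsely_spanned dsdv).
have ddSD : dd_bounded B (S :\: D) (2 ^ k).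
  move=> Y sY nY; apply: eq_dd_le (IH Y (subset_trans sY (subsetDl _ _)) nY) => Z sZY.
  exact: eqmx_colres_indep (colres_col_mx_redundant (vB Y sY)) sZY.
apply: dd_boundedW (dd_bounded_setD ddSD).
by rewrite expnS mul2n -addnn leq_add2l.
Qed.

Section Coloop.
Variables (m : nat) (B : 'M[F]_(m, n)) (e : 'I_n).
Let Be := col_mx B (delta_mx 0 e : 'rV[F]_n).

Lemma indep_coloop Y : indep Be Y = indep Be (Y :\ e).
Proof.
apply/idP/idP=> [|/indepP iYe]; first exact: indepS (subD1set Y e).
apply/indepP=> u; rewrite tr_col_mx mul_mx_row => /eqP; rewrite row_mx_eq0.
case/andP=> /eqP uB /eqP ue suY; apply: iYe.
  by rewrite tr_col_mx mul_mx_row uB ue row_mx0.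
apply/subsetP=> j ju; rewrite !inE (subsetP suY) // andbT.
apply: contraTneq ju => ->; rewrite inE negbK.
by move/matrixP: ue => /(_ 0 0); rewrite trmx_delta -colE !mxE => ->.
Qed.

Lemma coloop_connected Y : connected Be Y -> e \in Y -> Y = [set e].
Proof.
move=> /connectedP conn eY; apply/eqP; rewrite eqEsubset sub1set eY andbT.
apply/subsetP=> f fY; rewrite inE eq_sym; apply: contraT => nef.
have [C [_ /andP[dC /forallP minC] eC _]] := conn e f eY fY nef.
by move: dC; rewrite indep_coloop (implyP (minC _) (properD1 eC)).
Qed.

End Coloop.

Lemma dsd_le_component m (B : 'M[F]_(m, n)) S C k :
  dsd_le B S k -> component B S C -> dsd_le B C k.
Proof.
case=> {m B S k} [m B S k iS|m B S k _ _ dsdC|m B S k v dS cS dsdv] compC.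
- by case/componentP: compC => sCS _ _ _; apply/dsd_indep/(indepS sCS).
- exact: dsdC.
- by rewrite (component_connected compC cS); apply: dsd_conn dS cS dsdv.
Qed.

Lemma eq_dsd_le m1 m2 (B1 : 'M[F]_(m1, n)) (B2 : 'M[F]_(m2, n)) S k :
  (colres B1 S == colres B2 S)%MS -> dsd_le B1 S k -> dsd_le B2 S k.
Proof.
move=> + dsd1; elim: dsd1 m2 B2 => {m1 B1 S k}
    [m B S k iS|m B S k dS ncS _ IH|m B S k v dS cS _ IH] m2 B2 eqS;
  have eqT := eqmx_colres_indep eqS.
- by apply: dsd_indep; rewrite -eqT.
- apply: dsd_disc; [by rewrite -eqT | by rewrite -(eq_connected eqT (subxx S)) |].
  move=> C; rewrite -(eq_component eqT) => compC; apply: IH => //.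
  have /componentP[sCS _ _ _] := compC.
  by apply/eqmxP; rewrite (colres_sub B sCS) (colres_sub B2 sCS); apply/eqmxMr/eqmxP.
- apply: (dsd_conn (v := v)); [by rewrite -eqT | by rewrite -(eq_connected eqT (subxx S)) |].
  apply: IH; rewrite !colres_col_mx -!addsmxE; apply/eqmxP.
  by apply: adds_eqmx; [apply/eqmxP | apply: eqmx_refl].
Qed.

Lemma dsd_le_dd_le m (B : 'M[F]_(m, n)) T k : dd_le B T k -> dsd_le B T k.
Proof.
elim=> {T k} [S k S1 k1|S k _ ncS _ IH|S k e S1 cS eS _ IH];
  have [iS|dS] := boolP (indep B S); try exact: dsd_indep.
- have [e Se] : exists e, S = [set e] by apply/cards1P/eqP.
  rewrite {S S1}Se in dS *; case: k k1 => // k _.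
  apply: (dsd_conn (v := delta_mx 0 e)) => //.
    by apply: connected_small; rewrite cards1.
  by apply: dsd_indep; rewrite indep_coloop setDv indep0.
- exact: dsd_disc.
apply: (dsd_conn (v := delta_mx 0 e)) => //; set Be := col_mx B _.
have dsdSe : dsd_le Be (S :\ e) k.
  apply: eq_dsd_le IH; apply/eqmxP/eqmx_sym/eqmxP/colres_col_mx_redundant.
  suff -> : colres (delta_mx 0 e : 'rV[F]_n) (S :\ e) = 0 by apply: sub0mx.
  by apply/rowP=> j; rewrite !mxE; case: ifP => // /setD1P[/negbTE-> _]; rewrite andbF.
have [iSe|dSe] := boolP (indep Be S); first exact: dsd_indep.
apply: dsd_disc => // [|C compC].
  by apply/negP=> /coloop_connected/(_ eS) Se; apply: S1; rewrite Se cards1.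
have /componentP[sCS _ cC _] := compC.
have [eC|eC] := boolP (e \in C).
  by apply: dsd_indep; rewrite (coloop_connected cC eC) indep_coloop setDv indep0.
apply: dsd_le_component dsdSe (componentS compC _ (subD1set S e)).
by apply/subsetP=> j jC; rewrite !inE (subsetP sCS) // andbT; apply: contraNneq eC => <-.
Qed.

End DepthComparison.

Lemma epsilon_least (P : nat -> Prop) k0 : P k0 ->
  let k := epsilon (inhabits 0%N) (fun k => P k /\ forall j, P j -> (k <= j)%N) in
  P k /\ forall j, P j -> (k <= j)%N.
Proof.
move=> Pk0; apply: (epsilon_spec _ (fun k => P k /\ forall j, P j -> (k <= j)%N)).
have [k [[Pk mink] _]] := @dec_inh_nat_subset_has_unique_least_element P
  (fun k => classic (P k)) (ex_intro P k0 Pk0).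
by exists k; split=> // j /mink/leP.
Qed.

Theorem theorem13 :
  exists f : nat -> nat,
    forall (F : fieldType) (m n : nat) (A : 'M[F]_(m, n)),
      (0 < n)%N ->
      (dsd A [set: 'I_n] <= dd A [set: 'I_n] <= f (dsd A [set: 'I_n]))%N.
Proof.
exists (fun k => 2 ^ k)%N => F m n A n0; set T := [set: 'I_n].
have nT : T != set0 by apply/set0Pn; exists (Ordinal n0); rewrite inE.
have [ddT ddT_min] := epsilon_least (dd_bounded_card A (subxx T) nT).
have [dsdT dsdT_min] := epsilon_least (dsd_le_dd_le ddT).
apply/andP; split; first exact/dsdT_min/dsd_le_dd_le.
exact/ddT_min/(dd_bounded_dsd_le dsdT (subxx T) nT).
Qed.
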